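(* There is no cubic graph $G$ with a proper $5$-edge-coloring $c$ such that $|N_G(c)|=1$.
   Context: Graphs are finite, undirected, loopless, and may contain parallel edges. A proper $5$-edge-coloring of $G$ is a map $c:E(G)\to\{1,\dots,5\}$ with adjacent edges receiving different colors. For such $c$ and a vertex $v$, $S_c(v)$ is the set of colors on edges incident to $v$. An edge $uv$ of a cubic graph is poor if $|S_c(u)\cup S_c(v)|=3$, rich if $|S_c(u)\cup S_c(v)|=5$, and abnormal if it is neither poor nor rich. $N_G(c)$ denotes the set of abnormal edges of $G$ with respect to $c$. *)

From mathcomp Require Import all_boot.
Set Implicit Arguments. Unset Strict Implicit. Unset Printing Implicit Defensive.

(* Parallel
   edges are allowed since distinct edges may have the same endpoints. *)
Record multigraph := Multigraph {
  vtx : finType;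
  edg : finType;
  end1 : edg -> vtx;
  end2 : edg -> vtx;
  loopless : forall e, end1 e != end2 e
}.

Section Defs.
Variable G : multigraph.

Definition incident (v : vtx G) (e : edg G) : bool :=
  (end1 e == v) || (end2 e == v).

Definition inc_edges (v : vtx G) : {set edg G} := [set e | incident v e].

Definition cubic : Prop := forall v : vtx G, #|inc_edges v| = 3.

Definition adjacent_edges (e f : edg G) : bool :=
  (e != f) && [exists v, incident v e && incident v f].

(* proper 5-edge-coloring, colors {1..5} represented by 'I_5 *)
Definition proper5 (c : edg G -> 'I_5) : Prop :=
  forall e f, adjacent_edges e f -> c e != c f.

Definition Sc (c : edg G -> 'I_5) (v : vtx G) : {set 'I_5} :=
  [set c e | e in inc_edges v].

Definition edge_colset (c : edg G -> 'I_5) (e : edg G) : {set 'I_5} :=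
  Sc c (end1 e) :|: Sc c (end2 e).

Definition poor (c : edg G -> 'I_5) (e : edg G) : bool := #|edge_colset c e| == 3.
Definition rich (c : edg G -> 'I_5) (e : edg G) : bool := #|edge_colset c e| == 5.
Definition abnormal (c : edg G -> 'I_5) (e : edg G) : bool :=
  ~~ poor c e && ~~ rich c e.

Definition abnormal_edges (c : edg G -> 'I_5) : {set edg G} :=
  [set e | abnormal c e].
End Defs.

From mathcomp Require Import all_boot zify.

Set Implicit Arguments. Unset Strict Implicit. Unset Printing Implicit Defensive.

(* In a cubic graph properly coloured with 5 colours every colour set S_c(v)
   is a 3-subset of the colours.  For a colour x and a 3-set T containing x,
   let T' = {x} u (complement of T) be the other 3-set meeting T only in x.
   Every vertex whose colour set is T or T' has exactly one x-coloured edge,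
   so by a handshake argument the number of such vertices has the parity of
   the number of x-coloured edges leaving this class.  A poor x-edge joins
   two vertices with equal colour sets and a rich x-edge joins a T-vertex to
   a T'-vertex, so only abnormal x-edges can leave the class.

   If e0 (of colour a) were the only abnormal edge, the parity of the number
   of vertices with colour set T would thus be unchanged by T |-> T' for every
   colour x <> a, but changed for x = a and T = S_c(end1 e0).  This is
   impossible: two such moves swap one colour of T for another, and swaps
   avoiding a already connect T to its a-partner T'. *)

Definition opp (x : 'I_5) (T : {set 'I_5}) : {set 'I_5} := x |: ~: T.

Lemma oppK (x : 'I_5) (T : {set 'I_5}) : x \in T -> opp x (opp x T) = T.
Proof.
move=> xT; apply/setP => y; rewrite !inE.
by case: eqVneq => [->|_] /=; rewrite ?xT ?negbK.
Qed.

Lemma card_opp (x : 'I_5) (T : {set 'I_5}) : x \in T -> #|opp x T| = #|~: T|.+1.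
Proof. by move=> xT; rewrite cardsU1 inE negbK xT. Qed.

Lemma swap_invariant (T : finType) (a : T) (k : nat) (f : {set T} -> bool) :
  (forall (S : {set T}) (x y : T), #|S| = k -> y \in S -> x \notin S -> x != a -> y != a ->
     f (x |: (S :\ y)) = f S) ->
  forall S S' : {set T}, #|S| = k -> #|S'| = k -> (a \in S) = (a \in S') -> f S = f S'.
Proof.
move=> swap S S'; move: {2}#|S :\: S'| (leqnn #|S :\: S'|) => n.
elim: n S => [|n IH] S le_n cS cS' aS.
  have sub : S \subset S' by rewrite -setD_eq0 -cards_eq0 -leqn0.
  by congr (f _); apply/eqP; rewrite eqEcard sub cS cS' leqnn.
have [-> //|neq] := eqVneq S S'.
have [y yD] : exists y, y \in S :\: S'.
  apply/set0Pn; apply: contra neq; rewrite setD_eq0 => sub.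
  by rewrite eqEcard sub cS cS' leqnn.
have [x xD] : exists x, x \in S' :\: S.
  apply/card_gt0P; rewrite cardsD setIC cS' -cS -cardsD.
  by apply/card_gt0P; exists y.
move: yD xD => /setDP [yS yS'] /setDP [xS' xS].
have ya : y != a by apply: contraNneq yS' => ya; rewrite ya -aS -ya.
have xa : x != a by apply: contraNneq xS => xa; rewrite xa aS -xa.
rewrite -(swap S x y) //; apply: IH.
- rewrite -ltnS; apply: leq_trans le_n; apply: proper_card; rewrite properE.
  apply/andP; split; apply/subsetP.
    move=> z; rewrite !inE => /andP [zS' /predU1P [zx|/andP [_ ->]]].
      by rewrite zx xS' in zS'.
    by rewrite zS'.
  move=> /(_ y); rewrite !inE eqxx yS yS' /= orbF => /(_ isT) /eqP yx.
  by rewrite yx xS' in yS'.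
- rewrite cardsU1 !inE (negbTE xS) andbF.
  by move: (cardsD1 y S); rewrite yS cS; lia.
- exact: cS'.
- by rewrite !inE eq_sym (negbTE xa) eq_sym ya.
Qed.

Lemma opp_opp_swap (x y : 'I_5) (T : {set 'I_5}) : opp x (opp y T) = x |: (T :\ y).
Proof. by rewrite /opp setCU setCK setDE setIC. Qed.

Lemma opp_invariance (a : 'I_5) (f : {set 'I_5} -> bool) :
  (forall x (T : {set 'I_5}), x != a -> x \in T -> #|T| = 3 -> f (opp x T) = f T) ->
  forall U : {set 'I_5}, a \in U -> #|U| = 3 -> f (opp a U) = f U.
Proof.
have card_compl (T : {set 'I_5}) : #|T| = 3 -> #|~: T| = 2.
  by move: (cardsC T); rewrite card_ord => + cT; rewrite cT; lia.
move=> opp_inv U aU cU; apply: (swap_invariant (k := 3) (a := a)).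
- move=> S x y cS yS xS xa ya.
  rewrite -opp_opp_swap opp_inv ?card_opp ?card_compl ?opp_inv //.
  by rewrite !inE xS orbT.
- by rewrite card_opp // card_compl.
- exact: cU.
- by rewrite !inE eqxx aU.
Qed.

Section ColouredGraph.
Variables (G : multigraph) (c : edg G -> 'I_5).
Hypothesis proper : proper5 c.

Lemma colour_inj_at v e f : incident v e -> incident v f -> c e = c f -> e = f.
Proof.
move=> ve vf cef; apply/eqP; apply: contraT => nef.
have /proper : adjacent_edges e f.
  by rewrite /adjacent_edges nef; apply/existsP; exists v; rewrite ve vf.
by rewrite cef eqxx.
Qed.

Lemma colour_in_Sc v e : incident v e -> c e \in Sc c v.
Proof. by move=> ve; apply/imsetP; exists e; rewrite ?inE. Qed.

Lemma colour_at_end1 e : c e \in Sc c (end1 e).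
Proof. by rewrite colour_in_Sc // /incident eqxx. Qed.

Lemma one_edge_of_colour x v :
  x \in Sc c v -> \sum_(e | c e == x) (incident v e : nat) = 1.
Proof.
case/imsetP => e0; rewrite inE => ve0 ->.
rewrite (bigD1 e0) //= ve0 big1 // => f /andP [/eqP cf nf].
by apply/eqP; rewrite eqb0; apply: contra nf => vf; rewrite (colour_inj_at vf ve0).
Qed.

Lemma sum_indicator (Q : pred (vtx G)) u : \sum_(v | Q v) (u == v : nat) = Q u.
Proof.
rewrite big_mkcond (bigD1 u) //= eqxx big1 ?addn0; first by case: (Q u).
by move=> v /negbTE; rewrite eq_sym => ->; case: (Q v).
Qed.

Definition crosses (Q : pred (vtx G)) (e : edg G) : bool := Q (end1 e) != Q (end2 e).

Lemma handshake_parity x (Q : pred (vtx G)) :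
  (forall v, Q v -> x \in Sc c v) ->
  odd #|[set v | Q v]| = odd #|[set e | (c e == x) && crosses Q e]|.
Proof.
move=> Qx.
have -> : #|[set v | Q v]| = \sum_(e | c e == x) (Q (end1 e) + Q (end2 e)).
  transitivity (\sum_(v | Q v) \sum_(e | c e == x) (incident v e : nat)).
    rewrite -sum1_card; apply: eq_big => [v|v]; first by rewrite inE.
    by rewrite inE => /Qx /one_edge_of_colour ->.
  rewrite exchange_big /=; apply: eq_bigr => e _.
  have split_inc v : (incident v e : nat) = (end1 e == v) + (end2 e == v).
    rewrite /incident; case: eqVneq => [<-|] //=.
    by rewrite eq_sym (negbTE (loopless e)).
  by rewrite (eq_bigr _ (fun v _ => split_inc v)) big_split /= !sum_indicator.
rewrite -sum1_card [in RHS](eq_bigl (fun e => (c e == x) && crosses Q e)) => [|e];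
  last by rewrite inE.
rewrite big_mkcondr /= !(big_morph odd oddD (erefl : odd 0 = false)).
by apply: eq_bigr => e _; rewrite oddD /crosses; case: (Q (end1 e)); case: (Q (end2 e)).
Qed.

Hypothesis cub : cubic G.

Lemma card_Sc v : #|Sc c v| = 3.
Proof.
rewrite card_in_imset; first exact: cub.
by move=> e f; rewrite !inE => ve vf; exact: colour_inj_at ve vf.
Qed.

Lemma normal_edge_ends e :
  ~~ abnormal c e = (Sc c (end2 e) \in [set Sc c (end1 e); opp (c e) (Sc c (end1 e))]).
Proof.
have xU := colour_at_end1 e.
have xW : c e \in Sc c (end2 e) by rewrite colour_in_Sc // /incident eqxx orbT.
have cU := card_Sc (end1 e); have cW := card_Sc (end2 e).
rewrite /abnormal negb_and !negbK /poor /rich /edge_colset !inE.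
move: xU xW cU cW; set U := Sc c _; set W := Sc c _; set x := c e => xU xW cU cW.
congr (_ || _); apply/eqP/eqP => [cUW|->].
- have UW : U = U :|: W by apply/eqP; rewrite eqEcard subsetUl cU cUW leqnn.
  have WU : W = U :|: W by apply/eqP; rewrite eqEcard subsetUr cW cUW leqnn.
  by rewrite WU -UW.
- by rewrite setUid.
- have UWT : U :|: W = setT by apply/eqP; rewrite eqEcard subsetT cardsT card_ord cUW.
  have sub : opp x U \subset W.
    apply/subsetP => y; rewrite !inE => /predU1P [-> //|yU].
    by move: (in_setT y); rewrite -UWT inE (negbTE yU).
  apply/eqP; rewrite eq_sym eqEcard sub card_opp // cW.
  by move: (cardsC U); rewrite cU card_ord; lia.
- by rewrite /opp setUCA setUCr setUT cardsT card_ord.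
Qed.

Definition count_Sc (T : {set 'I_5}) : nat := #|[set v | Sc c v == T]|.

Definition pair_class (x : 'I_5) (T : {set 'I_5}) (v : vtx G) : bool :=
  Sc c v \in [set T; opp x T].

Lemma opp_pair_class x (T U : {set 'I_5}) : x \in T -> x \in U ->
  (opp x U \in [set T; opp x T]) = (U \in [set T; opp x T]).
Proof.
move=> xT xU.
have opp_eq (A B : {set 'I_5}) : x \in A -> x \in B -> (opp x A == B) = (A == opp x B).
  by move=> xA xB; apply/eqP/eqP => [<-|->]; rewrite oppK.
by rewrite !inE opp_eq // (opp_eq U) ?oppK ?setU11 // orbC.
Qed.

Lemma normal_not_crossing e (T : {set 'I_5}) :
  c e \in T -> ~~ abnormal c e -> ~~ crosses (pair_class (c e) T) e.
Proof.
move=> xT; rewrite normal_edge_ends /crosses /pair_class negbK.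
have xU := colour_at_end1 e.
by case/set2P => ->; rewrite ?opp_pair_class ?eqxx.
Qed.

(* The two colour sets of a pair are distinct, so the class size splits. *)
Lemma card_pair_class x (T : {set 'I_5}) : x \in T -> #|T| = 3 ->
  #|[set v | pair_class x T v]| = count_Sc T + count_Sc (opp x T).
Proof.
move=> xT cT; have neq : T != opp x T.
  apply/eqP => TT; have /card_gt0P [y] : 0 < #|~: T|.
    by move: (cardsC T); rewrite card_ord cT; lia.
  rewrite inE => yT; move: (yT).
  by rewrite {1}TT !inE (negbTE yT) orbT.
rewrite /count_Sc -cardsUI.
have -> : [set v | Sc c v == T] :&: [set v | Sc c v == opp x T] = set0.
  apply/setP => v; rewrite !inE; apply/negP => /andP [/eqP -> /eqP TT].
  by rewrite -TT eqxx in neq.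
by rewrite cards0 addn0; apply: eq_card => v; rewrite /pair_class !inE.
Qed.

Lemma parity_pair_class x (T : {set 'I_5}) : x \in T -> #|T| = 3 ->
  odd (count_Sc T + count_Sc (opp x T)) =
  odd #|[set e | [&& abnormal c e, c e == x & crosses (pair_class x T) e]]|.
Proof.
move=> xT cT; rewrite -card_pair_class // (@handshake_parity x) => [|v].
  congr (odd _); apply: eq_card => e; rewrite !inE.
  have [cx|] := eqVneq (c e) x; last by rewrite !andbF.
  have xeT : c e \in T by rewrite cx.
  case: (boolP (abnormal c e)) => // /(normal_not_crossing xeT).
  by rewrite cx => /negbTE ->.
by rewrite /pair_class !inE => /orP [] /eqP ->; rewrite ?xT ?setU11.
Qed.

End ColouredGraph.

Theorem mainTheorem6 :
  ~ exists (G : multigraph) (c : edg G -> 'I_5),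
      [/\ cubic G, proper5 c & #|abnormal_edges c| = 1].
Proof.
move=> [G [c [cub proper /eqP/cards1P [e0 abE]]]].
have abnormalE e : abnormal c e = (e == e0) by rewrite -in_set1 -abE inE.
pose a := c e0; pose U := Sc c (end1 e0).
pose f (T : {set 'I_5}) := odd (count_Sc c T).
(* For colours x other than a no abnormal edge has colour x. *)
have f_inv x (T : {set 'I_5}) : x != a -> x \in T -> #|T| = 3 -> f (opp x T) = f T.
  move=> xa xT cT; apply/eqP; rewrite eq_sym -negb_add -oddD.
  rewrite parity_pair_class // eq_card0 // => e; rewrite !inE abnormalE.
  by case: eqVneq => //= ->; rewrite eq_sym (negbTE xa).
(* For the colour a the edge e0 leaves the class of U. *)
have : f (opp a U) != f U.
  rewrite eq_sym -negb_add negbK -oddD parity_pair_class ?card_Sc ?colour_at_end1 //.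
  have -> : [set e | [&& abnormal c e, c e == a & crosses (pair_class c a U) e]] = [set e0].
    apply/setP => e; rewrite !inE abnormalE; case: eqVneq => //= ->.
    rewrite eqxx /crosses /pair_class -/U !inE eqxx /= -/a.
    have := normal_edge_ends proper cub e0.
    by rewrite abnormalE eqxx !inE => <-.
  by rewrite cards1.
by rewrite opp_invariance ?eqxx ?card_Sc ?colour_at_end1.
Qed.
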